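(* Let $d\ge 2$. There are constants $C_1,C_2>0$ depending only on $d$ such that for all $n\ge d+2$, all $\mathcal{F}$, $B_i$, $\mathcal{X}_v,\mathcal{Y}_v$ as in the context, and every $v\in[n]$, $$|\mathcal{Y}_v|\le C_1\left(\binom{n-1}{d-1}-|\mathcal{X}_v|\right)^{\frac{d}{d-1}}+C_2\,n^{\frac{d(d-2)}{d-1}}.$$
   Context: Let $\mathcal{F}=\{F_1,\dots,F_m\}\subseteq\binom{[n]}{d+1}$ consist of distinct sets and have VC-dimension at most $d$ (no $(d+1)$-set $S$ is shattered, i.e. no $S$ such that every $A\subseteq S$ equals $F\cap S$ for some $F\in\mathcal{F}$). For $i\in[m]$, call $B\subsetneq F_i$ admissible for $F_i$ if $F\cap F_i\neq B$ for every $F\in\mathcal{F}$ (admissible sets exist by the VC-dimension assumption). For each $i$, $B_i$ is a fixed admissible set for $F_i$ of maximum cardinality among all admissible sets for $F_i$. For $v\in[n]$, $\mathcal{X}_v:=\{F_k\setminus\{v\}: k\in[m],\ v\in B_k\}$ and $\mathcal{Y}_v:=\{F_k\setminus\{v\}: k\in[m],\ v\in F_k\setminus B_k\}$. *)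

From HB Require Import structures.
From mathcomp Require Import all_boot all_order all_algebra.
From mathcomp Require Import reals exp.
Set Implicit Arguments. Unset Strict Implicit. Unset Printing Implicit Defensive.

(* Ground set [n] is represented by 'I_n (0-indexed relabelling). *)

Definition shattered (n : nat) (FF : {set {set 'I_n}}) (S : {set 'I_n}) : Prop :=
  forall A : {set 'I_n}, A \subset S -> exists2 F, F \in FF & F :&: S = A.

Definition VCdim_le (n d : nat) (FF : {set {set 'I_n}}) : Prop :=
  forall S : {set 'I_n}, #|S| = d.+1 -> ~ shattered FF S.

Definition admissible (n : nat) (FF : {set {set 'I_n}}) (Fi B : {set 'I_n}) : Prop :=
  B \proper Fi /\ forall F, F \in FF -> F :&: Fi != B.

Definition max_admissible (n : nat) (FF : {set {set 'I_n}}) (Fi B : {set 'I_n}) : Prop :=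
  admissible FF Fi B /\ forall B', admissible FF Fi B' -> #|B'| <= #|B|.

Definition Xfam (n : nat) (FF : {set {set 'I_n}}) (B : {set 'I_n} -> {set 'I_n})
  (v : 'I_n) : {set {set 'I_n}} :=
  [set F :\ v | F in FF & v \in B F].

Definition Yfam (n : nat) (FF : {set {set 'I_n}}) (B : {set 'I_n} -> {set 'I_n})
  (v : 'I_n) : {set {set 'I_n}} :=
  [set F :\ v | F in FF & v \in F :\: B F].

(* The sets F_k \ v in Y_v are d-sets, so a Lovasz-type form of the
   Kruskal-Katona theorem gives |Y_v| <= s^(d/(d-1)), s being the size of
   their (d-1)-shadow.  This shadow avoids v and is disjoint from the family
   of distinct (d-1)-sets B_k \ v with v in B_k and |B_k| = d: by maximality
   of B_k, no member of the family other than F_k contains such a B_k.  Hence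
   s <= C(n-1,d-1) - |X_v| + #{k : v in B_k, |B_k| < d}.  The last count is
   O(n^(d-2)): there are O(n^(d-2)) candidate sets B_0, and a branching
   argument shows that B_0 = B_k for at most (d+1)^(d+1) indices k. *)

From HB Require Import structures.
From mathcomp Require Import all_boot all_order all_algebra.
From mathcomp Require Import reals exp.
From mathcomp Require Import zify.
Import Order.TTheory GRing.Theory Num.Theory.
Set Implicit Arguments. Unset Strict Implicit. Unset Printing Implicit Defensive.

Lemma card_bigcup_le (I T : finType) (P : pred I) (F : I -> {set T}) :
  #|\bigcup_(i | P i) F i| <= \sum_(i | P i) #|F i|.
Proof.
elim/big_ind2: _ => [|A1 k1 A2 k2 le1 le2|//]; first by rewrite cards0.
exact: leq_trans (leq_card_setU _ _) (leq_add le1 le2).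
Qed.

Lemma leq_bin_exp n j : 'C(n, j) <= n ^ j.
Proof.
apply: (@leq_trans (n ^_ j)); first by rewrite -bin_ffact leq_pmulr ?fact_gt0.
rewrite ffact_prod -[j in n ^ j]card_ord -prod_nat_const.
by apply: leq_prod => i _; exact: leq_subr.
Qed.

Lemma card_small_sets (T : finType) e : 0 < #|T| ->
  #|[set A : {set T} | #|A| < e]| <= e * #|T| ^ e.-1.
Proof.
move=> T_gt0.
have -> : [set A : {set T} | #|A| < e] = \bigcup_(j < e) [set A : {set T} | #|A| == j].
  apply/setP => A; rewrite inE; apply/idP/bigcupP => [ltAe | [j _]].
    by exists (Ordinal ltAe); rewrite ?inE.
  by rewrite inE => /eqP ->.
apply: leq_trans (card_bigcup_le _ _) _.
apply: (@leq_trans (\sum_(j < e) #|T| ^ e.-1)); last by rewrite sum_nat_const card_ord.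
apply: leq_sum => j _; rewrite card_draws.
apply: leq_trans (leq_bin_exp _ _) (leq_pexp2l T_gt0 _).
by move: (ltn_ord j); lia.
Qed.

Lemma expn_sum_le (I : finType) (k s : nat) (a b : I -> nat) : 0 < k ->
    (forall i, a i ^ k <= s * b i ^ k) ->
  (\sum_i a i) ^ k <= s * (\sum_i b i) ^ k.
Proof.
move=> k_gt0 ab.
have expn_sumE c : (\sum_i c i) ^ k = \sum_(f : {ffun 'I_k -> I}) \prod_j c (f j).
  by rewrite -[k in _ ^ k]card_ord -prod_nat_const bigA_distr_bigA.
rewrite !expn_sumE big_distrr /=; apply: leq_sum => f _.
have expn_prod (c : 'I_k -> nat) : (\prod_j c j) ^ k = \prod_j c j ^ k.
  by elim/big_ind2: _ => [|x1 y1 x2 y2 <- <-|]; rewrite ?exp1n ?expnMn.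
rewrite -(leq_exp2r _ _ k_gt0) expnMn !expn_prod -[k in s ^ k]card_ord.
by rewrite -prod_nat_const -big_split; apply: leq_prod => j _.
Qed.

Lemma expnS_le_mul_expn m a b s : a <= s -> (0 < a -> a ^ m <= b ^ m.+1) ->
  a ^ m.+1 <= s * b ^ m.+1.
Proof.
move=> le_as; have [-> | _ /(_ isT) le_ab] := posnP a; first by move=> _; rewrite exp0n.
have [le_sb | lt_bs] := leqP (s ^ m) (b ^ m.+1).
  by apply: (@leq_trans (s ^ m.+1)); rewrite ?leq_exp2r // expnS leq_mul2l le_sb orbT.
have [m0 | m_gt0] := posnP m.
  by move: lt_bs le_ab; rewrite m0 expn0 expn1 ltnS leqn0 => /eqP ->.
rewrite -(leq_exp2r _ _ m_gt0) expnAC.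
apply: (@leq_trans ((b ^ m.+1) ^ m.+1)); first by rewrite leq_exp2r.
by rewrite expnSr expnMn [leqRHS]mulnC leq_mul2l ltnW ?orbT.
Qed.

Section Shadow.
Variable T : finType.
Implicit Types (Y : {set {set T}}) (x : T).

Definition shadow (m : nat) Y : {set {set T}} :=
  [set H : {set T} | (#|H| == m) && [exists G in Y, H \subset G]].

Definition link x Y : {set {set T}} := [set G :\ x | G in Y & x \in G].

Lemma card_link x Y : #|link x Y| = \sum_(G in Y) (x \in G : nat).
Proof.
rewrite card_in_imset => [|G1 G2]; last first.
  rewrite !inE => /andP[_ xG1] /andP[_ xG2] eqG.
  by rewrite -(setD1K xG1) -(setD1K xG2) eqG.
rewrite -sum1_card [LHS]big_mkcond [RHS]big_mkcond; apply: eq_bigr => G _.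
by rewrite inE; case: (G \in Y); case: (x \in G).
Qed.

Lemma sum_card_link k Y : (forall G, G \in Y -> #|G| = k) ->
  \sum_x #|link x Y| = k * #|Y|.
Proof.
move=> Y_unif; rewrite (eq_bigr _ (fun x _ => card_link x Y)) exchange_big /=.
rewrite (eq_bigr (fun _ => k)) => [|G GY]; first by rewrite sum_nat_const mulnC.
rewrite -(Y_unif _ GY) -sum1_card [RHS]big_mkcond.
by apply: eq_bigr => x _; case: (x \in G).
Qed.

Lemma card_shadow m Y H : H \in shadow m Y -> #|H| = m.
Proof. by rewrite inE => /andP[/eqP]. Qed.

Lemma card_link_uniform m Y x : (forall G, G \in Y -> #|G| = m.+1) ->
  forall G, G \in link x Y -> #|G| = m.
Proof.
move=> Y_unif G /imsetP[G0]; rewrite inE => /andP[G0Y xG0] ->.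
by move: (Y_unif _ G0Y); rewrite (cardsD1 x) xG0 add1n => -[].
Qed.

Lemma link_sub_shadow m Y x : (forall G, G \in Y -> #|G| = m.+1) ->
  link x Y \subset shadow m Y.
Proof.
move=> Y_unif; apply/subsetP => G xYG; rewrite inE (card_link_uniform Y_unif xYG) eqxx.
case/imsetP: xYG => G0; rewrite inE => /andP[G0Y _] ->.
by apply/existsP; exists G0; rewrite G0Y subD1set.
Qed.

Lemma shadow_link_sub m Y x : shadow m (link x Y) \subset link x (shadow m.+1 Y).
Proof.
apply/subsetP => H; rewrite inE => /andP[/eqP cardH /existsP[G /andP[]]].
case/imsetP=> G0; rewrite inE => /andP[G0Y xG0] -> HG.
have xH : x \notin H by apply/negP => /(subsetP HG); rewrite !inE eqxx.
apply/imsetP; exists (x |: H); last by rewrite setU1K.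
rewrite inE setU11 andbT inE cardsU1 xH cardH eqxx /=.
apply/existsP; exists G0; rewrite G0Y subUset sub1set xG0.
exact: subset_trans HG (subsetDl _ _).
Qed.

Lemma card_shadow_ge m Y :
  (forall G, G \in Y -> #|G| = m.+1) -> Y != set0 ->
  #|Y| ^ m <= #|shadow m Y| ^ m.+1.
Proof.
elim: m Y => [|m IH] Y Y_unif Y_neq0.
  case/set0Pn: Y_neq0 => G GY; rewrite expn0 expn1 card_gt0; apply/set0Pn.
  by exists set0; rewrite inE cards0 eqxx; apply/existsP; exists G; rewrite GY sub0set.
set S := shadow m.+1 Y.
have link_le x : #|link x Y| ^ m.+1 <= #|S| * #|link x S| ^ m.+1.
  apply: expnS_le_mul_expn; first exact/subset_leq_card/link_sub_shadow.
  rewrite card_gt0 => xY_neq0.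
  apply: leq_trans (IH _ (card_link_uniform Y_unif) xY_neq0) _.
  by rewrite leq_exp2r // subset_leq_card // shadow_link_sub.
(* Summed over x, with double counting: ((m+2)|Y|)^(m+1) <= |S| ((m+1)|S|)^(m+1). *)
have := expn_sum_le (ltn0Sn m) link_le.
rewrite (sum_card_link Y_unif) (sum_card_link (@card_shadow m.+1 Y)) !expnMn.
rewrite mulnCA -expnS => le_YS.
rewrite -(@leq_pmul2l (m.+1 ^ m.+1)) ?expn_gt0 //.
by apply: leq_trans le_YS; rewrite leq_mul2r leq_exp2r // leqnSn orbT.
Qed.

End Shadow.

Section MaxAdmissible.
Variables (n d : nat) (FF : {set {set 'I_n}}) (B : {set 'I_n} -> {set 'I_n}).
Hypothesis FF_unif : forall F, F \in FF -> #|F| = d.+1.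
Hypothesis B_max : forall F, F \in FF -> max_admissible FF F (B F).
Implicit Types F A K : {set 'I_n}.

Lemma B_proper F : F \in FF -> B F \proper F.
Proof. by case/B_max => -[]. Qed.

Lemma B_sub F : F \in FF -> B F \subset F.
Proof. by move/B_proper/proper_sub. Qed.

Lemma trace_neq_B F F' : F \in FF -> F' \in FF -> F' :&: F != B F.
Proof. by case/B_max => -[_ not_trace] _ /not_trace. Qed.

Lemma B_maximal F A : F \in FF -> A \proper F -> #|B F| < #|A| ->
  exists2 F', F' \in FF & F' :&: F = A.
Proof.
move=> FF_F ltAF ltBA.
have [/exists_inP[F' FF_F' /eqP eqA] | /exists_inPn not_trace] :=
  boolP [exists F' in FF, F' :&: F == A]; first by exists F'.
have := (B_max FF_F).2 A (conj ltAF not_trace).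
by rewrite leqNgt ltBA.
Qed.

Lemma B_full_sub_eq F F' : F \in FF -> F' \in FF -> #|B F'| = d ->
  B F' \subset F -> F = F'.
Proof.
move=> FF_F FF_F' cardB BF'F; apply/eqP; apply: contraTT (trace_neq_B FF_F' FF_F).
move=> neqF; rewrite negbK eq_sym eqEcard subsetI BF'F B_sub //= cardB.
rewrite -ltnS -(FF_unif FF_F') ltn_neqAle subset_leq_card ?subsetIr // andbT.
apply: contra neqF => /eqP cardFF'.
have F'F : F' \subset F by apply/setIidPr/eqP; rewrite eqEcard subsetIr cardFF' /=.
by rewrite eq_sym eqEcard F'F (FF_unif FF_F) (FF_unif FF_F') /=.
Qed.

Definition Bfiber (B0 : {set 'I_n}) K := [set F in FF | (B F == B0) && (K \subset F)].

Lemma Bfiber_le1_or_escape (B0 : {set 'I_n}) K : [disjoint K & B0] ->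
  #|Bfiber B0 K| <= 1 \/
  #|K| <= d /\ exists2 F', F' \in FF & B0 \subset F' /\ [disjoint F' & K].
Proof.
move=> disjKB0.
have [-> | [F0]] := set_0Vmem (Bfiber B0 K); first by left; rewrite cards0.
rewrite inE => /and3P[FF_F0 /eqP BF0 KF0].
have [F0_sub | /subsetPn[x F0x]] := boolP (F0 \subset B0 :|: K).
  left; rewrite -(cards1 F0) subset_leq_card //; apply/subsetP => F.
  rewrite !inE => /and3P[FF_F /eqP BF KF].
  rewrite eq_sym eqEcard (FF_unif FF_F) (FF_unif FF_F0) leqnn andbT.
  by apply: subset_trans F0_sub _; rewrite subUset KF -BF B_sub.
rewrite inE negb_or => /andP[xB0 xK].
right; split.
  have ltKF0 : K \proper F0 by apply/properP; split => //; exists x.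
  by rewrite -ltnS -(FF_unif FF_F0) proper_card.
have [K0 | [k Kk]] := set_0Vmem K.
  exists F0 => //; split; first by rewrite -BF0 B_sub.
  by rewrite K0 disjoints_subset setC0 subsetT.
(* F0 :\: K is a proper subset of F0 larger than B0 = B F0, so by maximality
   it is the trace on F0 of some member F'. *)
have B0_sub : B0 \subset F0 :\: K.
  by rewrite subsetD -BF0 B_sub //= BF0 disjoint_sym.
have F0K_proper : F0 :\: K \proper F0.
  by apply/properP; split; [exact: subsetDl | exists k; rewrite ?inE ?Kk ?(subsetP KF0)].
have ltB_F0K : #|B F0| < #|F0 :\: K|.
  rewrite BF0 proper_card //; apply/properP; split => //.
  by exists x; rewrite ?inE ?xK.
have [F' FF_F' traceF'] := B_maximal FF_F0 F0K_proper ltB_F0K.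
exists F' => //; split; first by rewrite (subset_trans B0_sub) // -traceF' subsetIl.
rewrite disjoints_subset; apply/subsetP => u F'u; rewrite inE; apply/negP => Ku.
have : u \in F' :&: F0 by rewrite inE F'u (subsetP KF0).
by rewrite traceF' inE Ku.
Qed.

Lemma card_Bfiber_le (B0 : {set 'I_n}) j K : [disjoint K & B0] -> d < #|K| + j ->
  #|Bfiber B0 K| <= d.+1 ^ j.
Proof.
elim: j K => [|j IH] K disjKB0 lt_d_Kj.
  have [|[leKd _]] := Bfiber_le1_or_escape disjKB0; first by rewrite expn0.
  by move: lt_d_Kj; rewrite addn0 ltnNge leKd.
have [le1 | [_ [F' FF_F' [B0F' disjF'K]]]] := Bfiber_le1_or_escape disjKB0.
  by rewrite (leq_trans le1) ?expn_gt0.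
(* The trace on F' of a member of the fiber is not B0, so the member meets
   F' :\: B0, whose points lie outside K. *)
have sub : Bfiber B0 K \subset \bigcup_(u in F' :\: B0) Bfiber B0 (u |: K).
  apply/subsetP => F; rewrite inE => /and3P[FF_F /eqP BF KF].
  have /subsetPn[u] : ~~ (F' :&: F \subset B0).
    apply: contra (trace_neq_B FF_F FF_F') => subB0.
    by rewrite BF eqEcard subB0 subset_leq_card // subsetI B0F' -BF B_sub.
  rewrite inE => /andP[F'u Fu] uB0.
  apply/bigcupP; exists u; first by rewrite inE uB0 F'u.
  by rewrite inE FF_F BF eqxx subUset sub1set Fu KF.
apply: leq_trans (subset_leq_card sub) (leq_trans (card_bigcup_le _ _) _).
apply: (@leq_trans (\sum_(u in F' :\: B0) d.+1 ^ j)).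
  apply: leq_sum => u; rewrite inE => /andP[uB0 F'u]; apply: IH.
    by rewrite disjoints_subset subUset sub1set inE uB0 -disjoints_subset.
  by rewrite cardsU1 (disjointFr disjF'K F'u) add1n addSnnS.
rewrite sum_nat_const expnS leq_mul2r -(FF_unif FF_F').
by rewrite subset_leq_card ?subsetDl ?orbT.
Qed.

Lemma card_Bfiber0_le (B0 : {set 'I_n}) : #|Bfiber B0 set0| <= d.+1 ^ d.+1.
Proof. by apply: card_Bfiber_le; rewrite ?disjoints_subset ?sub0set ?cards0. Qed.

Variable v : 'I_n.

Definition Xfull := [set F in FF | (v \in B F) && (#|B F| == d)].
Definition Xsmall := [set F in FF | (v \in B F) && (#|B F| < d)].

Lemma card_Xfam_le : #|Xfam FF B v| <= #|Xfull| + #|Xsmall|.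
Proof.
apply: leq_trans (leq_imset_card _ _) _.
apply: (@leq_trans #|Xfull :|: Xsmall|); last by rewrite cardsU leq_subr.
apply/subset_leq_card/subsetP => F; rewrite !inE => /andP[FF_F vB].
rewrite FF_F vB /= -leq_eqVlt -ltnS -(FF_unif FF_F).
exact/proper_card/B_proper.
Qed.

Lemma card_Xsmall_le : #|Xsmall| <= d.-1 * n ^ d.-2 * d.+1 ^ d.+1.
Proof.
pose Bs := [set B0 : {set 'I_n} | (v \in B0) && (#|B0| < d)].
have sub : Xsmall \subset \bigcup_(B0 in Bs) Bfiber B0 set0.
  apply/subsetP => F; rewrite inE => /andP[FF_F vB_small].
  by apply/bigcupP; exists (B F); rewrite ?inE ?FF_F ?eqxx ?sub0set.
apply: leq_trans (subset_leq_card sub) (leq_trans (card_bigcup_le _ _) _).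
apply: (@leq_trans (\sum_(B0 in Bs) d.+1 ^ d.+1)).
  by apply: leq_sum => B0 _; exact: card_Bfiber0_le.
rewrite sum_nat_const leq_mul2r; apply/orP; right.
have <- : #|[set B0 :\ v | B0 in Bs]| = #|Bs|.
  apply: card_in_imset => B1 B2; rewrite !inE => /andP[vB1 _] /andP[vB2 _] eqB.
  by rewrite -(setD1K vB1) -(setD1K vB2) eqB.
have n_gt0 : 0 < #|'I_n| by rewrite card_ord (leq_ltn_trans _ (ltn_ord v)).
rewrite -[n in n ^ _](card_ord n); apply: leq_trans (card_small_sets d.-1 n_gt0).
apply/subset_leq_card/subsetP => A /imsetP[B0 + ->]; rewrite !inE => /andP[vB0 ltB0].
by move: ltB0; rewrite (cardsD1 v B0) vB0 add1n; lia.
Qed.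

Lemma card_Yfam_member G : G \in Yfam FF B v -> #|G| = d.
Proof.
case/imsetP => F; rewrite !inE => /andP[FF_F /andP[_ vF]] ->.
by move: (FF_unif FF_F); rewrite (cardsD1 v) vF add1n => -[].
Qed.

Lemma card_shadow_Yfam_Xfull_le :
  #|shadow d.-1 (Yfam FF B v)| + #|Xfull| <= 'C(n.-1, d.-1).
Proof.
set S := shadow d.-1 (Yfam FF B v).
pose W := [set H : {set 'I_n} | H \subset [set~ v] & #|H| == d.-1].
pose Bv F := B F :\ v.
have SW : S \subset W.
  apply/subsetP => H; rewrite !inE => /andP[-> /exists_inP[_ /imsetP[F _ ->] HF]].
  by rewrite andbT; apply: subset_trans HF _; apply/subsetP => u; rewrite !inE => /andP[].
have BvW : Bv @: Xfull \subset W.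
  apply/subsetP => H /imsetP[F + ->]; rewrite /Xfull inE => /and3P[FF_F vB /eqP cardB].
  rewrite inE; apply/andP; split; first by apply/subsetP => u; rewrite !inE => /andP[].
  by move: cardB; rewrite (cardsD1 v) vB add1n => <-.
have disjSBv : [disjoint S & Bv @: Xfull].
  rewrite -setI_eq0; apply/eqP/setP => H; rewrite !inE; apply/negP.
  case/andP => /andP[_ /exists_inP[_ /imsetP[F FF_F ->] HF]] /imsetP[F' Xfull_F' eqH].
  move: FF_F Xfull_F'; rewrite !inE => /andP[FF_F /andP[vB vF]] /and3P[FF_F' vB' cardB'].
  suff eqF : F = F' by rewrite eqF vB' in vB.
  apply: B_full_sub_eq => //; first exact/eqP.
  rewrite -(setD1K vB') subUset sub1set vF -/(Bv F') -eqH.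
  exact: subset_trans HF (subD1set _ _).
have BvI : {in Xfull &, injective Bv}.
  move=> F1 F2; rewrite !inE => /and3P[FF_F1 vB1 _] /and3P[FF_F2 vB2 /eqP cardB2] eqBv.
  have eqB : B F1 = B F2 by rewrite -(setD1K vB1) -(setD1K vB2) -/(Bv F1) eqBv.
  by apply: B_full_sub_eq; rewrite // -eqB B_sub.
have -> : 'C(n.-1, d.-1) = #|W| by rewrite cards_draws cardsC1 card_ord.
rewrite -(card_in_imset BvI) -cardsUI (disjoint_setI0 disjSBv) cards0 addn0.
by rewrite subset_leq_card // subUset SW BvW.
Qed.

Lemma card_shadow_Yfam_le : #|shadow d.-1 (Yfam FF B v)| <=
  ('C(n.-1, d.-1) - #|Xfam FF B v|) + d.-1 * n ^ d.-2 * d.+1 ^ d.+1.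
Proof.
have := card_shadow_Yfam_Xfull_le; have := card_Xfam_le; have := card_Xsmall_le.
lia.
Qed.

End MaxAdmissible.

Local Open Scope ring_scope.

Lemma ler_powR_of_lerX (R : realType) (x y : R) (k m : nat) :
  0 <= x -> 0 <= y -> x ^+ m.+1 <= y ^+ k -> x <= powR y (k%:R / m.+1%:R).
Proof.
move=> x_ge0 y_ge0 le_xy.
have {1}-> : x = powR (x ^+ m.+1) m.+1%:R^-1.
  by rewrite -powR_mulrn // -powRrM mulfV ?pnatr_eq0 // powRr1.
rewrite powRrM powR_mulrn //.
by apply: ge0_ler_powR; rewrite ?nnegrE ?invr_ge0 ?exprn_ge0.
Qed.

Lemma card_le_powR_shadow (R : realType) (T : finType) m (Y : {set {set T}}) :
  (forall G, G \in Y -> #|G| = m.+2) ->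
  (#|Y|%:R : R) <= powR #|shadow m.+1 Y|%:R (m.+2%:R / m.+1%:R).
Proof.
move=> Y_unif; have [-> | Y_neq0] := eqVneq Y set0; first by rewrite cards0 powR_ge0.
by apply: ler_powR_of_lerX; rewrite // -!natrX ler_nat card_shadow_ge.
Qed.

Lemma powR_add_le (R : realType) (a b p : R) : 0 <= p -> 0 <= a -> 0 <= b ->
  powR (a + b) p <= powR 2 p * powR a p + powR 2 p * powR b p.
Proof.
move=> p_ge0; wlog le_ab : a b / a <= b => [wlog_ab a_ge0 b_ge0|a_ge0 b_ge0].
  have [/wlog_ab|/ltW/wlog_ab] := leP a b; first by apply.
  by move/(_ b_ge0 a_ge0); rewrite addrC [leRHS]addrC.
apply: (@le_trans _ _ (powR (2 * b) p)).
  by apply: ge0_ler_powR; rewrite ?nnegrE ?addr_ge0 ?mulr_ge0 // mulrDl mul1r lerD2r.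
by rewrite powRM // lerDr mulr_ge0 ?powR_ge0.
Qed.

Unset Implicit Arguments.

Theorem claim3p4 (R : realType) (d : nat) : (2 <= d)%N ->
  exists C1 C2 : R, 0 < C1 /\ 0 < C2 /\
  forall (n : nat) (FF : {set {set 'I_n}}) (B : {set 'I_n} -> {set 'I_n}),
    (d + 2 <= n)%N ->
    (forall F, F \in FF -> #|F| = d.+1) ->
    VCdim_le d FF ->
    (forall F, F \in FF -> max_admissible FF F (B F)) ->
    forall v : 'I_n,
      (#|Yfam FF B v|%:R : R) <=
        C1 * powR ((('C(n.-1, d.-1) - #|Xfam FF B v|)%N)%:R) (d%:R / (d.-1)%:R)
        + C2 * powR (n%:R) ((d * (d - 2))%:R / (d.-1)%:R).
Proof.
case: d => [|[|e]] // _.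
pose p : R := e.+2%:R / e.+1%:R.
pose K := (e.+1 * e.+3 ^ e.+3)%N.
have p_ge0 : 0 <= p by rewrite divr_ge0.
exists (powR 2 p), (powR 2 p * powR K%:R p).
split; first by rewrite powR_gt0.
split; first by rewrite mulr_gt0 // powR_gt0 // ltr0n muln_gt0 expn_gt0.
(* The VC-dimension bound only guarantees that admissible sets exist, which
   B_max already presupposes. *)
move=> n FF B _ FF_unif _ B_max v.
rewrite -[e.+2.-1]/e.+1 !subSS subn0 -/p.
set D := ('C(n.-1, e.+1) - #|Xfam FF B v|)%N.
have le_shadow : (#|shadow e.+1 (Yfam FF B v)| <= D + K * n ^ e)%N.
  by rewrite mulnAC; exact: card_shadow_Yfam_le FF_unif B_max v.
have powR_Kn :
    powR (K%:R * n%:R ^+ e) p = powR K%:R p * powR n%:R ((e.+2 * e)%:R / e.+1%:R).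
  by rewrite powRM ?exprn_ge0 // -powR_mulrn // -powRrM natrM /p mulrCA mulrA.
apply: le_trans (card_le_powR_shadow R (card_Yfam_member (B:=B) (v:=v) FF_unif)) _.
rewrite -/p -mulrA -powR_Kn.
apply: le_trans _ (powR_add_le p_ge0 (ler0n _ _) _); last by rewrite mulr_ge0 ?exprn_ge0.
apply: (ge0_ler_powR p_ge0); rewrite ?nnegrE ?addr_ge0 ?mulr_ge0 ?exprn_ge0 //.
by rewrite -natrX -natrM -natrD ler_nat.
Qed.
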